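(* Let $\mathsf{F},\mathsf{B}:\mathbf{Set}\to\mathbf{Set}$ be functors. If $\mathsf{F}$ and $\mathsf{B}$ preserve monomorphisms whose domain is the empty set, then every homomorphism $h:(X,f)\to(Y,g)$ in $\mathit{Dialg}(\mathsf{F},\mathsf{B})$ factors as $h=m\circ e$, where $e:(X,f)\to(X',f')$ and $m:(X',f')\to(Y,g)$ are dialgebra homomorphisms whose underlying functions are respectively surjective and injective, and this factorisation is unique up to isomorphism of dialgebras. Without the assumption on $\mathsf{F}$ and $\mathsf{B}$, such a factorisation still exists for every homomorphism $h:(X,f)\to(Y,g)$ with $X\neq\emptyset$.
   Context: For functors $\mathsf{F},\mathsf{B}:\mathbf{Set}\to\mathbf{Set}$, an $(\mathsf{F},\mathsf{B})$-dialgebra is a pair $(X,f)$ with $X$ a set (the carrier) and $f:\mathsf{F}X\to\mathsf{B}X$ a function. A homomorphism $h:(X,f)\to(Y,g)$ is a function $h:X\to Y$ with $g\circ\mathsf{F}h=\mathsf{B}h\circ f$. Dialgebras and homomorphisms form the category $\mathit{Dialg}(\mathsf{F},\mathsf{B})$. *)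

Record SetFunctor := {
  Fobj : Type -> Type;
  Fmap : forall A B : Type, (A -> B) -> Fobj A -> Fobj B;
  Fmap_id : forall (A : Type) (a : Fobj A), Fmap A A (fun x => x) a = a;
  Fmap_comp : forall (A B C : Type) (u : A -> B) (v : B -> C) (a : Fobj A),
      Fmap A C (fun x => v (u x)) a = Fmap B C v (Fmap A B u a)
}.

Arguments Fmap s {A B} _ _.

Definition injective {A B : Type} (u : A -> B) : Prop :=
  forall x y, u x = u y -> x = y.

Definition surjective {A B : Type} (u : A -> B) : Prop :=
  forall y, exists x, u x = y.

Definition preserves_empty_monos (F : SetFunctor) : Prop :=
  forall (E Y : Type) (m : E -> Y), (E -> False) -> injective m ->
    injective (Fmap F m).

Definition dialg_hom (F B : SetFunctor) {X Y : Type}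
  (f : Fobj F X -> Fobj B X) (g : Fobj F Y -> Fobj B Y) (h : X -> Y) : Prop :=
  forall a : Fobj F X, g (Fmap F h a) = Fmap B h (f a).

Definition epi_mono_factorisation (F B : SetFunctor) {X Y X' : Type}
  (f : Fobj F X -> Fobj B X) (g : Fobj F Y -> Fobj B Y) (h : X -> Y)
  (f' : Fobj F X' -> Fobj B X') (e : X -> X') (m : X' -> Y) : Prop :=
  dialg_hom F B f f' e /\ dialg_hom F B f' g m /\
  surjective e /\ injective m /\ (forall x, h x = m (e x)).


From Stdlib Require Import ClassicalEpsilon FunctionalExtensionality Classical.

(* The factorisation is the image factorisation of the underlying function,
   X ->> h[X] >-> Y, and the only issue is to equip h[X] with a dialgebra
   structure.  Choosing a section s of the surjection e : X ->> h[X], the map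
   f' := B e o f o F s works provided B m is injective for the inclusion m;
   injectivity of B m lets us cancel m in the homomorphism equations.
   Uniqueness is a diagonal argument: between two factorisations the map
   e2 o s1 commutes with the monos, hence (again cancelling B m2) is a
   dialgebra homomorphism, and the two such maps are mutually inverse.
   So everything rests on "B maps the relevant mono to a mono":
   - a mono with nonempty domain has a retraction, which every functor
     preserves, so its image is again a mono (this gives the second part);
   - monos with empty domain are handled by the hypothesis of the theorem. *)

Lemma Fmap_ext (F : SetFunctor) (A B : Type) (u v : A -> B) (a : Fobj F A) :
  (forall x, u x = v x) -> Fmap F u a = Fmap F v a.
Proof.
  intros Huv. replace v with u by (apply functional_extensionality; exact Huv).
  reflexivity.
Qed.

Lemma Fmap_compose (F : SetFunctor) (A B C : Type) (u : A -> B) (v : B -> C)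
  (a : Fobj F A) :
  Fmap F v (Fmap F u a) = Fmap F (fun x => v (u x)) a.
Proof. symmetry. apply Fmap_comp. Qed.

Lemma Fmap_retraction (F : SetFunctor) (A Y : Type) (m : A -> Y) (r : Y -> A) :
  (forall x, r (m x) = x) -> forall a, Fmap F r (Fmap F m a) = a.
Proof.
  intros Hrm a. rewrite Fmap_compose, (Fmap_ext F _ _ _ (fun x => x)) by exact Hrm.
  apply Fmap_id.
Qed.

Lemma injective_retraction (A Y : Type) (m : A -> Y) :
  inhabited A -> injective m -> exists r : Y -> A, forall x, r (m x) = x.
Proof.
  intros [x0] Hm.
  exists (fun y => match excluded_middle_informative (exists x, m x = y) with
           | left Hy => proj1_sig (constructive_indefinite_description _ Hy)
           | right _ => x0 end).
  intro x. destruct excluded_middle_informative as [Hy | Hy].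
  - destruct constructive_indefinite_description as [x' Hx']. simpl. now apply Hm.
  - exfalso. apply Hy. now exists x.
Qed.

Lemma Fmap_injective_inhabited (F : SetFunctor) (A Y : Type) (m : A -> Y) :
  inhabited A -> injective m -> injective (Fmap F m).
Proof.
  intros HA Hm. destruct (injective_retraction A Y m HA Hm) as [r Hr].
  intros a b Hab.
  rewrite <- (Fmap_retraction F A Y m r Hr a), <- (Fmap_retraction F A Y m r Hr b), Hab.
  reflexivity.
Qed.

Lemma Fmap_injective (F : SetFunctor) (A Y : Type) (m : A -> Y) :
  preserves_empty_monos F -> injective m -> injective (Fmap F m).
Proof.
  intros HF Hm. destruct (classic (inhabited A)) as [HA | HA].
  - now apply Fmap_injective_inhabited.
  - apply HF; [intro a; apply HA; now constructor | exact Hm].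
Qed.

Definition section {A B : Type} (e : A -> B) (He : surjective e) (y : B) : A :=
  proj1_sig (constructive_indefinite_description _ (He y)).

Lemma section_spec {A B : Type} (e : A -> B) (He : surjective e) (y : B) :
  e (section e He y) = y.
Proof. unfold section. now destruct constructive_indefinite_description. Qed.

Definition image {X Y : Type} (h : X -> Y) : Type := {y : Y | exists x, h x = y}.

Definition corestriction {X Y : Type} (h : X -> Y) (x : X) : image h :=
  exist _ (h x) (ex_intro _ x eq_refl).

Definition inclusion {X Y : Type} (h : X -> Y) (z : image h) : Y := proj1_sig z.

Lemma corestriction_surjective {X Y : Type} (h : X -> Y) :
  surjective (corestriction h).
Proof. intros [y [x <-]]. now exists x. Qed.

Lemma inclusion_injective {X Y : Type} (h : X -> Y) : injective (inclusion h).
Proof.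
  intros [y Hy] [y' Hy'] Heq. simpl in Heq. subst y'. f_equal. apply proof_irrelevance.
Qed.

(* This is the diagonal fill-in behind both existence and uniqueness. *)
Lemma hom_through_mono (F B : SetFunctor) (X1 X2 Y : Type)
  (f1 : Fobj F X1 -> Fobj B X1) (f2 : Fobj F X2 -> Fobj B X2)
  (g : Fobj F Y -> Fobj B Y) (m1 : X1 -> Y) (m2 : X2 -> Y) (p : X1 -> X2) :
  dialg_hom F B f1 g m1 -> dialg_hom F B f2 g m2 -> injective (Fmap B m2) ->
  (forall z, m2 (p z) = m1 z) -> dialg_hom F B f1 f2 p.
Proof.
  intros Hm1 Hm2 HBm2 Hp a. apply HBm2.
  rewrite <- Hm2, Fmap_compose, (Fmap_ext F _ _ _ m1) by exact Hp.
  rewrite Hm1, Fmap_compose. apply Fmap_ext. intro z. symmetry. apply Hp.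
Qed.

Lemma factorisation_structure (F B : SetFunctor) (X Y X' : Type)
  (f : Fobj F X -> Fobj B X) (g : Fobj F Y -> Fobj B Y) (h : X -> Y)
  (e : X -> X') (m : X' -> Y) :
  dialg_hom F B f g h -> surjective e -> injective m -> injective (Fmap B m) ->
  (forall x, h x = m (e x)) ->
  exists f' : Fobj F X' -> Fobj B X', epi_mono_factorisation F B f g h f' e m.
Proof.
  intros Hh He Hm HBm Hhme.
  set (s := section e He).
  set (f' := fun b => Fmap B e (f (Fmap F s b))).
  (* m is a homomorphism because h is and m o e o s = m. *)
  assert (Hm_hom : dialg_hom F B f' g m).
  { intro b. unfold f'. rewrite Fmap_compose, (Fmap_ext B _ _ _ h) by (intro; auto).
    rewrite <- Hh, Fmap_compose. f_equal. apply Fmap_ext. intro z.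
    unfold s. rewrite Hhme, section_spec. reflexivity. }
  exists f'. repeat split; auto.
  apply (hom_through_mono F B X X' Y f f' g h m e); auto.
Qed.

Lemma factorisation_exists (F B : SetFunctor) (X Y : Type)
  (f : Fobj F X -> Fobj B X) (g : Fobj F Y -> Fobj B Y) (h : X -> Y) :
  dialg_hom F B f g h -> injective (Fmap B (inclusion h)) ->
  exists (X' : Type) (f' : Fobj F X' -> Fobj B X') (e : X -> X') (m : X' -> Y),
    epi_mono_factorisation F B f g h f' e m.
Proof.
  intros Hh HBm.
  destruct (factorisation_structure F B X Y (image h) f g h
              (corestriction h) (inclusion h) Hh (corestriction_surjective h)
              (inclusion_injective h) HBm (fun x => eq_refl)) as [f' Hf'].
  now exists (image h), f', (corestriction h), (inclusion h).
Qed.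

Lemma factorisation_comparison (F B : SetFunctor) (X Y X1 X2 : Type)
  (f : Fobj F X -> Fobj B X) (g : Fobj F Y -> Fobj B Y) (h : X -> Y)
  (f1 : Fobj F X1 -> Fobj B X1) (e1 : X -> X1) (m1 : X1 -> Y)
  (f2 : Fobj F X2 -> Fobj B X2) (e2 : X -> X2) (m2 : X2 -> Y) :
  epi_mono_factorisation F B f g h f1 e1 m1 ->
  epi_mono_factorisation F B f g h f2 e2 m2 ->
  injective (Fmap B m2) ->
  exists phi : X1 -> X2, dialg_hom F B f1 f2 phi /\
    (forall x, phi (e1 x) = e2 x) /\ (forall z, m2 (phi z) = m1 z).
Proof.
  intros [_ [Hm1 [He1 [_ Hh1]]]] [_ [Hm2 [_ [Im2 Hh2]]]] HBm2.
  set (phi := fun z => e2 (section e1 He1 z)).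
  assert (Hphi : forall z, m2 (phi z) = m1 z).
  { intro z. unfold phi. now rewrite <- Hh2, Hh1, section_spec. }
  exists phi. repeat split; auto.
  - exact (hom_through_mono F B X1 X2 Y f1 f2 g m1 m2 phi Hm1 Hm2 HBm2 Hphi).
  - intro x. apply Im2. now rewrite Hphi, <- Hh1, Hh2.
Qed.

(* Uniqueness: the comparison maps in both directions are mutually inverse,
   since both composites commute with the injective maps into Y. *)
Lemma factorisation_unique (F B : SetFunctor) (X Y X1 X2 : Type)
  (f : Fobj F X -> Fobj B X) (g : Fobj F Y -> Fobj B Y) (h : X -> Y)
  (f1 : Fobj F X1 -> Fobj B X1) (e1 : X -> X1) (m1 : X1 -> Y)
  (f2 : Fobj F X2 -> Fobj B X2) (e2 : X -> X2) (m2 : X2 -> Y) :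
  epi_mono_factorisation F B f g h f1 e1 m1 ->
  epi_mono_factorisation F B f g h f2 e2 m2 ->
  injective (Fmap B m1) -> injective (Fmap B m2) ->
  exists (phi : X1 -> X2) (psi : X2 -> X1),
    dialg_hom F B f1 f2 phi /\ dialg_hom F B f2 f1 psi /\
    (forall z, psi (phi z) = z) /\ (forall w, phi (psi w) = w) /\
    (forall x, phi (e1 x) = e2 x) /\ (forall z, m2 (phi z) = m1 z).
Proof.
  intros H1 H2 HBm1 HBm2.
  destruct (factorisation_comparison F B X Y X1 X2 f g h f1 e1 m1 f2 e2 m2
              H1 H2 HBm2) as [phi [Hphi [Hphi_e Hphi_m]]].
  destruct (factorisation_comparison F B X Y X2 X1 f g h f2 e2 m2 f1 e1 m1
              H2 H1 HBm1) as [psi [Hpsi [_ Hpsi_m]]].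
  destruct H1 as [_ [_ [_ [Im1 _]]]]. destruct H2 as [_ [_ [_ [Im2 _]]]].
  exists phi, psi. repeat split; auto.
  - intro z. apply Im1. now rewrite Hpsi_m, Hphi_m.
  - intro w. apply Im2. now rewrite Hphi_m, Hpsi_m.
Qed.

Theorem proposition1 :
  (forall F B : SetFunctor,
     preserves_empty_monos F -> preserves_empty_monos B ->
     forall (X Y : Type) (f : Fobj F X -> Fobj B X) (g : Fobj F Y -> Fobj B Y)
            (h : X -> Y),
       dialg_hom F B f g h ->
       (exists (X' : Type) (f' : Fobj F X' -> Fobj B X') (e : X -> X') (m : X' -> Y),
           epi_mono_factorisation F B f g h f' e m) /\
       (forall (X1 : Type) (f1 : Fobj F X1 -> Fobj B X1) (e1 : X -> X1) (m1 : X1 -> Y)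
               (X2 : Type) (f2 : Fobj F X2 -> Fobj B X2) (e2 : X -> X2) (m2 : X2 -> Y),
           epi_mono_factorisation F B f g h f1 e1 m1 ->
           epi_mono_factorisation F B f g h f2 e2 m2 ->
           exists (phi : X1 -> X2) (psi : X2 -> X1),
             dialg_hom F B f1 f2 phi /\ dialg_hom F B f2 f1 psi /\
             (forall z, psi (phi z) = z) /\ (forall w, phi (psi w) = w) /\
             (forall x, phi (e1 x) = e2 x) /\ (forall z, m2 (phi z) = m1 z))) /\
  (forall (F B : SetFunctor)
          (X Y : Type) (f : Fobj F X -> Fobj B X) (g : Fobj F Y -> Fobj B Y)
          (h : X -> Y),
     dialg_hom F B f g h -> inhabited X ->
     exists (X' : Type) (f' : Fobj F X' -> Fobj B X') (e : X -> X') (m : X' -> Y),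
       epi_mono_factorisation F B f g h f' e m).
Proof.
  split.
  - intros F B _ HB X Y f g h Hh. split.
    + apply factorisation_exists; [exact Hh |].
      apply Fmap_injective; [exact HB | apply inclusion_injective].
    + intros X1 f1 e1 m1 X2 f2 e2 m2 H1 H2.
      apply (factorisation_unique F B X Y X1 X2 f g h f1 e1 m1 f2 e2 m2 H1 H2).
      * apply Fmap_injective; [exact HB | apply H1].
      * apply Fmap_injective; [exact HB | apply H2].
  - intros F B X Y f g h Hh [x0].
    apply factorisation_exists; [exact Hh |].
    apply Fmap_injective_inhabited;
      [exact (inhabits (corestriction h x0)) | apply inclusion_injective].
Qed.
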